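(* Let $J=(G=(V,E),s,t,c,\omega,d,a)$ be an instance of WMCP and let $u,v\in V$ be distinct vertices with $\{u,v\}\neq\{s,t\}$ such that every $(u,v)$-cut $A$ in $G$ satisfies $\omega(A)\ge a+1$. Then the merge of $u$ and $v$ in $J$ is an instance of WMCP equivalent to $J$.
   Context: All graphs are finite, simple and undirected. For a graph $G=(V,E)$ and distinct $x,y\in V$, an $(x,y)$-cut is an edge set $A\subseteq E$ such that $G-A$ contains no path from $x$ to $y$. For $f$ on $E$ and $F\subseteq E$, $f(F)=\sum_{e\in F}f(e)$. WMCP: input $G=(V,E)$, $s,t\in V$, $c:E\to\mathbb{N}$ (positive integers), $\omega:E\to\mathbb{N}$ (positive integers), integers $d,a$; question: is there $D\subseteq E$ with $c(D)\le d$ such that every $(s,t)$-cut $A\subseteq E\setminus D$ satisfies $\omega(A)>a$? Merge: for vertices $u,w$ (not necessarily adjacent), the merge of $u$ and $w$ in an instance is obtained by deleting $u$ and $w$ and adding a new vertex $v_{\{u,w\}}$ adjacent to every vertex of $N(\{u,w\})=(N(u)\cup N(w))\setminus\{u,w\}$; edges not incident with $u$ or $w$ keep their cost and capacity; for each $x\in N(\{u,w\})$ the new edge $\{v_{\{u,w\}},x\}$ gets cost $\min\{c(e'):e'\in E(x,\{u,w\})\}$ and capacity $\sum_{e'\in E(x,\{u,w\})}\omega(e')$, where $E(x,\{u,w\})$ is the set of edges between $x$ and $\{u,w\}$; if $s$ (resp. $t$) is among the merged vertices the new vertex takes its role; $d$ and $a$ are unchanged. Two instances are equivalent if both are yes-instances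 or both are no-instances. *)

From mathcomp Require Import all_boot all_order all_algebra.
Set Implicit Arguments. Unset Strict Implicit. Unset Printing Implicit Defensive.

Section WMCP.
Variable T : finType.

Definition simple_graph (g : rel T) : Prop := symmetric g /\ irreflexive g.

Definition edges (g : rel T) : {set {set T}} :=
  [set [set p.1; p.2] | p in [pred p : T * T | g p.1 p.2]].

Definition wsum (f : {set T} -> nat) (F : {set {set T}}) : nat :=
  \sum_(e in F) f e.

Definition is_cut (g : rel T) (x y : T) (A : {set {set T}}) : Prop :=
  A \subset edges g /\
  ~~ connect (fun p q => g p q && ([set p; q] \notin A)) x y.

Definition wmcp (g : rel T) (s t : T) (c w : {set T} -> nat) (d a : int) : Prop :=
  exists D : {set {set T}},
    [/\ D \subset edges g,
        ((wsum c D)%:Z <= d)%R &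
        forall A : {set {set T}}, A \subset edges g :\: D -> is_cut g s t A ->
          (a < (wsum w A)%:Z)%R].

Definition wmcp_instance (g : rel T) (s t : T) (c w : {set T} -> nat) : Prop :=
  [/\ simple_graph g, s != t,
      forall e, e \in edges g -> 0 < c e &
      forall e, e \in edges g -> 0 < w e].

Variables (u v : T).

(* Vertex type of the merged graph: None is the new vertex v_{u,v},
   Some x are the old vertices other than u, v. *)
Definition mvert := option {x : T | x \notin [set u; v]}.

(* Image of an old vertex: u, v go to the new vertex. *)
Definition mrole (x : T) : mvert := insub x.

Variable g : rel T.

Definition madj (p q : mvert) : bool :=
  match p, q with
  | Some x, Some y => g (val x) (val y)
  | None, Some y => g u (val y) || g v (val y)
  | Some x, None => g u (val x) || g v (val x)
  | None, None => false
  end.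

Variables (c w : {set T} -> nat).

Definition newcost (x : T) : nat :=
  if g u x then (if g v x then minn (c [set u; x]) (c [set v; x]) else c [set u; x])
  else c [set v; x].

Definition newcap (x : T) : nat :=
  (if g u x then w [set u; x] else 0) + (if g v x then w [set v; x] else 0).

Definition mpair (f : {set T} -> nat) (nf : T -> nat) (p q : mvert) : nat :=
  match p, q with
  | Some x, Some y => f [set val x; val y]
  | None, Some y => nf (val y)
  | Some x, None => nf (val x)
  | None, None => 0
  end.

Definition medgefun (h : mvert -> mvert -> nat) (e : {set mvert}) : nat :=
  if [pick p : mvert * mvert | (e == [set p.1; p.2]) && madj p.1 p.2] is Some p
  then h p.1 p.2 else 0.

Definition mcost : {set mvert} -> nat := medgefun (mpair c newcost).
Definition mcap : {set mvert} -> nat := medgefun (mpair w newcap).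

End WMCP.

Arguments madj [T] u v g p q.
Arguments mcost [T] u v g c _.
Arguments mcap [T] u v g w _.
Arguments newcost [T] u v g c x.
Arguments newcap [T] u v g w x.

From mathcomp Require Import all_boot all_order all_algebra.
Set Implicit Arguments. Unset Strict Implicit. Unset Printing Implicit Defensive.
Import Order.TTheory.

(* Write phi for the vertex map of the merge
   (u, v |-> the new vertex) and phiE for its action on edges.
   - Every merged edge e' has a fiber {e in E | phiE e = e'}: its capacity is
     the sum of the fiber's capacities (mcap_fiber, cap_preimage) and its
     cost is the least cost in the fiber (cost_le, cost_attained).
   - Forward (merge_preserves_yes): the image of a deletion set D costs at
     most c(D), and the preimage of a cut of the merged graph avoiding the
     image is an (s,t)-cut of G avoiding D with the same capacity.
   - Backward (merge_reflects_yes): a merged deletion set D' is lifted by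
     choosing a cheapest edge of each fiber.  An (s,t)-cut A of G avoiding the
     lift either separates u from v, and then has capacity >= a + 1 by
     hypothesis, or leaves u and v connected; then the merged edges whose
     whole fiber lies in A form a cut avoiding D' of capacity <= w(A). *)

Lemma set2_eq (X : finType) (a b c d : X) :
  ([set a; b] == [set c; d]) = ((a == c) && (b == d)) || ((a == d) && (b == c)).
Proof.
apply/eqP/idP; last by case/orP=> /andP[/eqP-> /eqP->] //; apply: setUC.
move=> E.
have ha : a \in [set c; d] by rewrite -E set21.
have hb : b \in [set c; d] by rewrite -E set22.
have hc : c \in [set a; b] by rewrite E set21.
have hd : d \in [set a; b] by rewrite E set22.
move: ha hb hc hd; rewrite !inE.
by do 4 (case/orP=> /eqP ?; subst); rewrite ?eqxx ?orbT.
Qed.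

Lemma sum_subset (X : finType) (A B : {set X}) (F : X -> nat) :
  A \subset B -> \sum_(i in A) F i <= \sum_(i in B) F i.
Proof.
move=> sAB; rewrite [X in _ <= X](bigID (mem A)) /=.
rewrite [X in X + _](eq_bigl (mem A)) ?leq_addr // => i /=.
by apply/andP/idP => [[]//|iA]; rewrite (subsetP sAB).
Qed.

Lemma connect_map (X Y : finType) (r : rel X) (r' : rel Y) (f : X -> Y) :
  (forall x y, r x y -> (f x = f y) \/ r' (f x) (f y)) ->
  forall x y, connect r x y -> connect r' (f x) (f y).
Proof.
move=> H x y /connectP [p pth ->] {y}.
elim: p x pth => [|z p IH] x /=; first by rewrite connect0.
case/andP=> rxz pth; apply: connect_trans (IH _ pth).
by case: (H _ _ rxz) => [->|h]; [exact: connect0 | exact: connect1].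
Qed.

Lemma connect_lift (X Y : finType) (r : rel X) (r' : rel Y) (f : X -> Y) :
  (forall x y, f x = f y -> connect r x y) ->
  (forall x q, r' (f x) q -> exists y, f y = q /\ connect r x y) ->
  forall x y, connect r' (f x) (f y) -> connect r x y.
Proof.
move=> H1 H2 x y /connectP [p pth lst].
suff [z [fz cz]] : exists z, f z = last (f x) p /\ connect r x z.
  by apply: connect_trans cz (H1 _ _ _); rewrite fz -lst.
elim: p x pth {lst} => [|q p IH] x /=; first by exists x; rewrite connect0.
case/andP=> rq pth; have [y1 [fy1 c1]] := H2 _ _ rq.
rewrite -fy1 in pth *; have [z [fz cz]] := IH _ pth.
by exists z; split=> //; apply: connect_trans cz.
Qed.

Section Merge.
Variables (T : finType) (g : rel T) (u v : T) (c w : {set T} -> nat).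
Hypothesis gsym : symmetric g.
Hypothesis girr : irreflexive g.
Hypothesis uv_ne : u != v.

Local Notation phi := (mrole u v).
Local Notation uv := [set u; v].
Local Notation M := (mvert u v).
Local Notation g' := (madj u v g).

Definition avoid (A : {set {set T}}) : rel T :=
  fun p q => g p q && ([set p; q] \notin A).

Lemma avoid_sym A : symmetric (avoid A).
Proof. by move=> p q; rewrite /avoid gsym setUC. Qed.

Lemma phiN x : x \in uv -> phi x = None.
Proof. by move=> xuv; rewrite /mrole insubF // xuv. Qed.

Lemma phi_eq x y : (phi x == phi y) = (x == y) || ((x \in uv) && (y \in uv)).
Proof.
rewrite /mrole; case: insubP => [x' hx vx|hx]; case: insubP => [y' hy vy|hy].
- by rewrite (negbTE hx) andFb orbF -vx -vy; apply/eqP/eqP => [[->]|/val_inj->].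
- apply/esym/negbTE; rewrite negb_or (negbTE hx) andFb andbT.
  by apply/eqP=> exy; move: hy; rewrite -exy hx.
- apply/esym/negbTE; rewrite negb_or (negbTE hy) andbF andbT.
  by apply/eqP=> exy; move: hx; rewrite exy hy.
- by move: hx hy; rewrite !negbK => -> ->; rewrite eqxx orbT.
Qed.

Lemma phi_out x y : y \notin uv -> (phi x == phi y) = (x == y).
Proof. by move=> hy; rewrite phi_eq (negbTE hy) andbF orbF. Qed.

Lemma madj_phi x y : g x y -> phi x != phi y -> g' (phi x) (phi y).
Proof.
move=> gxy; rewrite /mrole; case: insubP => [x' hx vx|hx]; case: insubP => [y' hy vy|hy] //=.
- by rewrite vx vy.
- move: hy; rewrite negbK !inE => /orP[]/eqP ey;
    by move: gxy; rewrite vx ey gsym => ->; rewrite ?orbT.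
- move: hx; rewrite negbK !inE => /orP[]/eqP ex;
    by move: gxy; rewrite vy ex => ->; rewrite ?orbT.
Qed.

Lemma madj_lift p q : g' p q -> exists x y, [/\ g x y, phi x = p & phi y = q].
Proof.
have [hu hv] : phi u = None /\ phi v = None by rewrite !phiN ?inE ?eqxx ?orbT.
case: p => [x|]; case: q => [y|] //=.
- by move=> gxy; exists (val x), (val y); rewrite /mrole !valK.
- case/orP=> h; [exists (val x), u | exists (val x), v];
    by rewrite ?hu ?hv /mrole valK gsym h.
- case/orP=> h; [exists u, (val y) | exists v, (val y)];
    by rewrite ?hu ?hv /mrole valK h.
Qed.

Lemma edges2 x y : ([set x; y] \in edges g) = g x y.
Proof.
apply/imsetP/idP => [[[z1 z2] /= gz /eqP]|gxy]; last by exists (x, y).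
by rewrite set2_eq => /orP[]/andP[/eqP-> /eqP->] //; rewrite gsym.
Qed.

Lemma edgesP e : reflect (exists x y, g x y /\ e = [set x; y]) (e \in edges g).
Proof.
apply: (iffP imsetP) => [[[x y] /= gxy ->]|[x [y [gxy ->]]]]; first by exists x, y.
by exists (x, y).
Qed.

Definition phiE (e : {set T}) : {set M} := [set phi x | x in e].

Lemma phiE2 x y : phiE [set x; y] = [set phi x; phi y].
Proof. by rewrite /phiE imsetU1 imset_set1. Qed.

Lemma medgesP e' : e' \in edges g' ->
  exists y1 y, [/\ g y1 y, y \notin uv, y1 != y & e' = [set phi y1; phi y]].
Proof.
case/imsetP=> [[p q]]; rewrite inE /= => apq ->.
have [x [y [gxy ex ey]]] := madj_lift apq.
move: apq; rewrite -ex -ey => apq.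
have nxy : phi x != phi y.
  by apply/eqP=> exy; move: apq; rewrite exy; case: (phi y) => //= z; rewrite girr.
have [hy|hy] := boolP (y \notin uv).
  by exists x, y; split=> //; apply: contraNneq nxy => ->.
have hx : x \notin uv.
  by apply: contraNN nxy => hx; rewrite phi_eq hx -[y \in uv]negbK hy orbT.
exists y, x; split=> //; first by rewrite gsym.
  by apply: contraNneq nxy => ->.
exact: setUC.
Qed.

Lemma mpair_sym (f : {set T} -> nat) (nf : T -> nat) p q :
  @mpair _ u v f nf p q = @mpair _ u v f nf q p.
Proof. by case: p => [x|]; case: q => [y|] //=; rewrite setUC. Qed.

Lemma medge_mpair_val (f : {set T} -> nat) (nf : T -> nat) y1 y :
  g y1 y -> y \notin uv -> y1 != y ->
  @medgefun _ u v g (@mpair _ u v f nf) [set phi y1; phi y] =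
  if y1 \in uv then nf y else f [set y1; y].
Proof.
move=> gy hy ny; have adj : g' (phi y1) (phi y) by rewrite madj_phi ?phi_out.
have -> : @medgefun _ u v g (@mpair _ u v f nf) [set phi y1; phi y] =
          @mpair _ u v f nf (phi y1) (phi y).
  rewrite /medgefun; case: pickP => [[p1 q1] /= /andP[E _]|/(_ (phi y1, phi y))].
    by move: E; rewrite set2_eq => /orP[]/andP[/eqP-> /eqP->] //; apply: mpair_sym.
  by rewrite /= eqxx adj.
rewrite /mrole; case: (insubP _ y) => [y' _ vy|]; last by rewrite hy.
case: (insubP _ y1) => [x' hx vx|hx] /=; first by rewrite (negbTE hx) vx vy.
by rewrite -[y1 \in uv]negbK hx /= vy.
Qed.

Lemma fiber_out y1 y : g y1 y -> y \notin uv -> y1 \notin uv -> forall e,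
  (e \in edges g) && (phiE e == [set phi y1; phi y]) = (e == [set y1; y]).
Proof.
move=> gy hy hy1 e; apply/andP/eqP => [[/edgesP [z1 [z2 [gz ->]]]]|->].
  by rewrite phiE2 set2_eq !phi_out // => /orP[]/andP[/eqP-> /eqP->] //; apply: setUC.
by rewrite edges2 phiE2 eqxx.
Qed.

Lemma fiber_in y1 y : y1 \in uv -> y \notin uv -> forall e,
  (e \in edges g) && (phiE e == [set phi y1; phi y]) =
  (e \in edges g) && ((e == [set u; y]) || (e == [set v; y])).
Proof.
move=> hy1 hy e; case E: (e \in edges g) => //=.
move/edgesP: E => [z1 [z2 [gz ->]]].
have in_uv z : (z == y1) || (z \in uv) = (z \in uv) by case: eqP => // ->.
rewrite phiE2 set2_eq !phi_eq hy1 (negbTE hy) !andbT !andbF !orbF !in_uv.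
rewrite !set2_eq !inE.
by case: (z1 == u); case: (z1 == v); case: (z2 == y); case: (z1 == y);
  case: (z2 == u); case: (z2 == v).
Qed.

Lemma mcap_fiber e' : e' \in edges g' ->
  mcap u v g w e' = \sum_(e in edges g | phiE e == e') w e.
Proof.
case/medgesP => y1 [y [gy hy ny ->]]; rewrite /mcap medge_mpair_val //.
case: ifP => hy1; last first.
  by rewrite (eq_bigl _ _ (fiber_out gy hy (negbT hy1))) big_pred1_eq.
have uy_vy : [set u; y] != [set v; y].
  rewrite set2_eq (negbTE uv_ne) /=.
  by apply: contra hy => /andP[/eqP-> _]; rewrite !inE eqxx.
rewrite (eq_bigl _ _ (fiber_in hy1 hy)) big_mkcond (bigD1 [set u; y]) //=.
rewrite (bigD1 [set v; y]) //=; last by rewrite eq_sym.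
rewrite big1 ?addn0 => [|e /andP[neu nev]]; last by rewrite (negbTE neu) (negbTE nev) andbF.
by rewrite !eqxx /= !orbT !andbT !edges2 /newcap; case: (g u y); case: (g v y).
Qed.

Definition preimE (A' : {set {set M}}) : {set {set T}} :=
  [set e in edges g | phiE e \in A'].

Lemma cap_preimage (A' : {set {set M}}) : A' \subset edges g' ->
  wsum (mcap u v g w) A' = wsum w (preimE A').
Proof.
move=> sA; rewrite /wsum [RHS](partition_big phiE (mem A')) /=; last first.
  by move=> e; rewrite inE => /andP[].
apply: eq_bigr => e' he'; rewrite mcap_fiber ?(subsetP sA) //.
apply: eq_bigl => e; rewrite inE; case: eqP => [->|]; by rewrite ?he' ?andbT ?andbF.
Qed.

Lemma newcost_le_u y : g u y -> newcost u v g c y <= c [set u; y].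
Proof. by move=> gu; rewrite /newcost gu; case: ifP => _ //; exact: geq_minl. Qed.

Lemma newcost_le_v y : g v y -> newcost u v g c y <= c [set v; y].
Proof. by move=> gv; rewrite /newcost gv; case: ifP => _ //; exact: geq_minr. Qed.

Lemma newcost_attained y : g u y || g v y ->
  (g u y && (c [set u; y] <= newcost u v g c y)) ||
  (g v y && (c [set v; y] <= newcost u v g c y)).
Proof.
rewrite /newcost; case gu: (g u y); case gv: (g v y) => //= _; rewrite ?leqnn //.
by rewrite !leq_min !leqnn /= ?andbT leq_total.
Qed.

Lemma cost_le e e' : e \in edges g -> phiE e = e' -> e' \in edges g' ->
  mcost u v g c e' <= c e.
Proof.
move=> eE pe; case/medgesP => y1 [y [gy hy ny ee']]; rewrite ee' in pe *.
rewrite /mcost medge_mpair_val //; case: ifP => hy1; last first.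
  by have := fiber_out gy hy (negbT hy1) e; rewrite eE pe eqxx /= => /esym/eqP ->.
have := fiber_in hy1 hy e; rewrite eE pe eqxx /= => /esym/orP[]/eqP ee;
  move: eE; rewrite ee edges2; [exact: newcost_le_u | exact: newcost_le_v].
Qed.

Lemma cost_attained e' : e' \in edges g' ->
  exists e, [&& e \in edges g, phiE e == e' & c e <= mcost u v g c e'].
Proof.
case/medgesP => y1 [y [gy hy ny ->]]; rewrite /mcost medge_mpair_val //.
case: ifP => hy1; last by exists [set y1; y]; rewrite edges2 gy phiE2 eqxx /=.
have [hN hu hv] : [/\ phi y1 = None, phi u = None & phi v = None].
  by split; apply: phiN; rewrite // !inE eqxx ?orbT.
have gUV : g u y || g v y by move: hy1 gy; rewrite !inE => /orP[]/eqP-> ->; rewrite ?orbT.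
case/orP: (newcost_attained gUV) => /andP[gz le];
  [exists [set u; y] | exists [set v; y]];
  by rewrite edges2 gz phiE2 ?hu ?hv hN eqxx.
Qed.

Definition imageE (D : {set {set T}}) : {set {set M}} :=
  [set e' in edges g' | [exists e in D, phiE e == e']].

Lemma image_cost (D : {set {set T}}) : D \subset edges g ->
  wsum (mcost u v g c) (imageE D) <= wsum c D.
Proof.
move=> DE; rewrite /wsum.
apply: (@leq_trans (\sum_(e' in imageE D) \sum_(e in D | phiE e == e') c e)).
  apply: leq_sum => e'; rewrite inE => /andP[he' /existsP[e /andP[eD /eqP pe]]].
  rewrite (bigD1 e) /=; last by rewrite eD pe eqxx.
  by apply: leq_trans (leq_addr _ _); apply: cost_le => //; exact: (subsetP DE).
have -> : \sum_(e' in imageE D) \sum_(e in D | phiE e == e') c e =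
          \sum_(e | (e \in D) && (phiE e \in imageE D)) c e.
  rewrite [RHS](partition_big phiE (mem (imageE D))) //=; last by move=> e /andP[].
  apply: eq_bigr => e' he'; apply: eq_bigl => e.
  by case: eqP => [->|]; rewrite ?he' ?andbT ?andbF.
by rewrite [X in _ <= X](bigID (fun e => phiE e \in imageE D)) /= leq_addr.
Qed.

Lemma preimage_cut s t (A' : {set {set M}}) :
  is_cut g' (phi s) (phi t) A' -> is_cut g s t (preimE A').
Proof.
case=> _ nc; split; first by apply/subsetP => e; rewrite inE => /andP[].
apply: contra nc => cst; apply: (connect_map _ cst) => x y /andP[gxy nA].
case: (eqVneq (phi x) (phi y)) => [|nxy]; [by left | right].
rewrite madj_phi //=; apply: contra nA => inA'.
by rewrite inE edges2 gxy phiE2 inA'.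
Qed.

Lemma merge_preserves_yes s t d a :
  wmcp g s t c w d a -> wmcp g' (phi s) (phi t) (mcost u v g c) (mcap u v g w) d a.
Proof.
case=> D [DE cD HD]; exists (imageE D); split.
- by apply/subsetP => e'; rewrite inE => /andP[].
- by apply: le_trans cD; rewrite lez_nat image_cost.
move=> A' sA' cutA'.
have sE : A' \subset edges g' by apply: subset_trans sA' (subsetDl _ _).
rewrite cap_preimage //; apply: HD (preimage_cut cutA').
apply/subsetP => e; rewrite !inE => /andP[eE pA]; rewrite eE andbT.
apply/negP => eD; move: (subsetP sA' _ pA); rewrite !inE (subsetP sE _ pA) /=.
by rewrite andbT => /existsPn /(_ e); rewrite eD eqxx.
Qed.

(* A cheapest edge of the fiber of e' (the fiber is nonempty for merged edges). *)
Definition cheapest (e' : {set M}) : {set T} :=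
  odflt set0 [pick e | [&& e \in edges g, phiE e == e' & c e <= mcost u v g c e']].

Lemma cheapestP e' : e' \in edges g' ->
  [&& cheapest e' \in edges g, phiE (cheapest e') == e'
    & c (cheapest e') <= mcost u v g c e'].
Proof.
move=> he'; rewrite /cheapest; case: pickP => [e he|none] //=.
by have [e he] := cost_attained he'; move: (none e); rewrite he.
Qed.

Lemma lift_cost (D' : {set {set M}}) : D' \subset edges g' ->
  wsum c (cheapest @: D') <= wsum (mcost u v g c) D'.
Proof.
move=> DE'; have pk e' (he' : e' \in D') := cheapestP (subsetP DE' e' he').
rewrite /wsum big_imset /=.
  by apply: leq_sum => e' he'; case/and3P: (pk _ he').
move=> x y hx hy exy; case/and3P: (pk _ hx) => _ /eqP <- _.
by case/and3P: (pk _ hy) => _ /eqP <- _; rewrite exy.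
Qed.

Definition contractE (A : {set {set T}}) : {set {set M}} :=
  [set e' in edges g' |
     [forall e, ((e \in edges g) && (phiE e == e')) ==> (e \in A)]].

Lemma contract_cap (A : {set {set T}}) : wsum (mcap u v g w) (contractE A) <= wsum w A.
Proof.
rewrite cap_preimage; last by apply/subsetP => e'; rewrite inE => /andP[].
apply: sum_subset; apply/subsetP => e; rewrite inE => /andP[eE].
by rewrite inE => /andP[_ /forallP /(_ e)]; rewrite eE eqxx.
Qed.

Lemma contract_avoids (D' : {set {set M}}) (A : {set {set T}}) :
  D' \subset edges g' ->
  A \subset edges g :\: cheapest @: D' -> contractE A \subset edges g' :\: D'.
Proof.
move=> DE' sA; apply/subsetP => e'; rewrite inE => /andP[e'E /forallP fib].
rewrite inE e'E andbT; apply/negP => eD'.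
case/and3P: (cheapestP e'E) => cE cphi _.
move: (fib (cheapest e')); rewrite cE cphi /= => /(subsetP sA).
by rewrite inE (imset_f _ eD').
Qed.

Lemma fibers_connected (A : {set {set T}}) : connect (avoid A) u v ->
  forall x y, phi x = phi y -> connect (avoid A) x y.
Proof.
move=> cuv x y /eqP; rewrite phi_eq => /orP[/eqP->|]; first exact: connect0.
rewrite !inE => /andP[] /orP[]/eqP-> /orP[]/eqP->; rewrite ?connect0 //.
by rewrite (sym_connect_sym (avoid_sym A)).
Qed.

Lemma contract_cut s t (A : {set {set T}}) : connect (avoid A) u v ->
  is_cut g s t A -> is_cut g' (phi s) (phi t) (contractE A).
Proof.
move=> cuv [_ nc]; split; first by apply/subsetP => e'; rewrite inE => /andP[].
apply: contra nc => c'; apply: (connect_lift (fibers_connected cuv) _ c').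
move=> x q /andP[aq nA'].
have qE : [set phi x; q] \in edges g' by apply/imsetP; exists (phi x, q).
move: nA'; rewrite inE qE /= negb_forall => /existsP [e]; rewrite negb_imply.
case/andP=> /andP[/edgesP [z1 [z2 [gz ee]]] pe] neA.
move: pe; rewrite ee phiE2 set2_eq => /orP[]/andP[/eqP p1 /eqP p2].
  exists z2; split=> //.
  apply: connect_trans (fibers_connected cuv (esym p1)) (connect1 _).
  by rewrite /avoid gz -ee neA.
exists z1; split=> //.
apply: connect_trans (fibers_connected cuv (esym p2)) (connect1 _).
by rewrite /avoid gsym gz setUC -ee neA.
Qed.

Lemma merge_reflects_yes s t d a :
  (forall A : {set {set T}}, is_cut g u v A -> (a + 1 <= (wsum w A)%:Z)%R) ->
  wmcp g' (phi s) (phi t) (mcost u v g c) (mcap u v g w) d a -> wmcp g s t c w d a.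
Proof.
move=> heavy [D' [DE' cD' HD']]; exists (cheapest @: D'); split.
- apply/subsetP => _ /imsetP [e' he' ->].
  by case/and3P: (cheapestP (subsetP DE' _ he')).
- by apply: le_trans cD'; rewrite lez_nat lift_cost.
move=> A sA cutA.
have sAE : A \subset edges g by apply: subset_trans sA (subsetDl _ _).
have [cuv|ncuv] := boolP (connect (avoid A) u v); last by rewrite -lezD1; apply: heavy.
apply: (lt_le_trans (HD' _ (contract_avoids DE' sA) (contract_cut cuv cutA))).
by rewrite lez_nat contract_cap.
Qed.

End Merge.

(* Main theorem: under the heavy (u,v)-connectivity hypothesis, merging u and
   v yields an equivalent WMCP instance. *)
Theorem mainTheorem18 (T : finType) (g : rel T) (s t : T)
    (c w : {set T} -> nat) (d a : int) (u v : T) :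
  wmcp_instance g s t c w ->
  u != v ->
  [set u; v] != [set s; t] ->
  (forall A : {set {set T}}, is_cut g u v A -> (a + 1 <= (wsum w A)%:Z)%R) ->
  (wmcp g s t c w d a <->
   wmcp (madj u v g) (mrole u v s) (mrole u v t)
        (mcost u v g c) (mcap u v g w) d a).
Proof.
move=> [[gsym girr] _ _ _] uv_ne _ heavy; split.
- exact: (merge_preserves_yes gsym girr uv_ne).
- exact: (merge_reflects_yes gsym girr uv_ne heavy).
Qed.
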